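(* $\mathcal{C}_2(10,5,3)\le 45230$.
   Context: $\mathcal{C}_q(n,k,r)$ is the minimum number of $k$-dimensional subspaces of $\mathbb{F}_q^n$ such that every $r$-dimensional subspace of $\mathbb{F}_q^n$ is contained in at least one of them. *)

From HB Require Import structures.
From mathcomp Require Import all_boot all_order all_algebra.
Set Implicit Arguments. Unset Strict Implicit. Unset Printing Implicit Defensive.
Import GRing.Theory.
Local Open Scope ring_scope.

Definition is_subspace_covering (F : fieldType) (n k r : nat)
    (S : seq {vspace 'rV[F]_n}) : Prop :=
  (forall U, U \in S -> \dim U = k) /\
  (forall W : {vspace 'rV[F]_n}, \dim W = r -> exists2 U, U \in S & (W <= U)%VS).

Definition covering_number_le (F : fieldType) (n k r N : nat) : Prop :=
  exists S : seq {vspace 'rV[F]_n}, is_subspace_covering k r S /\ (size S <= N)%N.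

(* Identify F_2^10 with F^2 for the field F = GF(32) = F_2[a]/(a^5 + a^2 + 1).  The covering
   consists of the 32^3 spaces spanned by the points (x, A x + B x^2 + C x^4), x in a basis of F,
   the vertical space {0} * F, and, for each of the 155 planes P of F and five 3-spaces V chosen
   for P, the 16 five-spaces projecting onto P and meeting {0} * F in {0} * V: 45169 spaces.

   The maps (x, y) |-> (a x, a y) and (x, y) |-> (x, y + s x) send every member into a member and
   together act transitively on the points with x <> 0.  A 3-space containing such a point can
   therefore be moved to one through (1, 0), and that every 3-space through (1, 0) lies in a
   member is checked by computation; a 3-space inside {0} * F lies in the vertical member. *)

From HB Require Import structures.
From mathcomp Require Import all_boot all_order all_algebra zify.
Set Implicit Arguments. Unset Strict Implicit. Unset Printing Implicit Defensive.

(** * The field GF(32) *)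

(* Coordinates in the basis 1, a, a^2, a^3, a^4. *)
Inductive gf32 := GF32 of bool & bool & bool & bool & bool.

Definition gf32_eqb (x y : gf32) : bool :=
  let: GF32 a0 a1 a2 a3 a4 := x in let: GF32 b0 b1 b2 b3 b4 := y in
  [&& eqb a0 b0, eqb a1 b1, eqb a2 b2, eqb a3 b3 & eqb a4 b4].

Lemma gf32_eqbP : Equality.axiom gf32_eqb.
Proof.
move=> [a0 a1 a2 a3 a4] [b0 b1 b2 b3 b4] /=; rewrite !eqbE.
apply: (iffP and5P) => [[/eqP-> /eqP-> /eqP-> /eqP-> /eqP->] // | [-> -> -> -> ->]].
by rewrite !eqxx.
Qed.
HB.instance Definition _ := hasDecEq.Build gf32 gf32_eqbP.

Definition gf32_bits (x : gf32) : seq bool :=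
  let: GF32 b0 b1 b2 b3 b4 := x in [:: b0; b1; b2; b3; b4].

Definition gf_of_nat (n : nat) : gf32 :=
  GF32 (odd n) (odd (n %/ 2)) (odd (n %/ 4)) (odd (n %/ 8)) (odd (n %/ 16)).

Definition gf32_enum : seq gf32 := map gf_of_nat (iota 0 32).
Definition gf32_basis : seq gf32 := map gf_of_nat [:: 1; 2; 4; 8; 16].

Lemma mem_gf32_enum x : x \in gf32_enum.
Proof. by case: x; do 5 case; vm_compute. Qed.

Definition gf0 : gf32 := gf_of_nat 0.
Definition gf1 : gf32 := gf_of_nat 1.

Definition gfadd (x y : gf32) : gf32 :=
  let: GF32 a0 a1 a2 a3 a4 := x in let: GF32 b0 b1 b2 b3 b4 := y in
  GF32 (a0 (+) b0) (a1 (+) b1) (a2 (+) b2) (a3 (+) b3) (a4 (+) b4).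

(* Multiplication by a, using a^5 = 1 + a^2. *)
Definition gfmulX (x : gf32) : gf32 :=
  let: GF32 b0 b1 b2 b3 b4 := x in GF32 b4 b0 (b1 (+) b4) b2 b3.

(* Horner's scheme in a: x y = y0 x + a (y1 x + a (y2 x + ...)). *)
Definition gfmul (x y : gf32) : gf32 :=
  let: GF32 b0 b1 b2 b3 b4 := y in
  let z b := if b then x else gf0 in
  gfadd (z b0) (gfmulX (gfadd (z b1) (gfmulX (gfadd (z b2) (gfmulX (gfadd (z b3) (gfmulX (z b4)))))))).

Definition gfexp (k : nat) : gf32 := iter k gfmulX gf1.

Lemma gf32_all (P : pred gf32) : all P gf32_enum -> forall x, P x.
Proof. by move=> /allP PE x; apply/PE/mem_gf32_enum. Qed.

Lemma gf32_all3 (P : gf32 -> gf32 -> gf32 -> bool) :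
  all (fun x => all (fun y => all (P x y) gf32_enum) gf32_enum) gf32_enum ->
  forall x y z, P x y z.
Proof. by move=> /gf32_all PE x y; move: (PE x) => /gf32_all /(_ y) /gf32_all. Qed.

Lemma gfaddA x y z : gfadd x (gfadd y z) = gfadd (gfadd x y) z.
Proof. by case: x y z => ? ? ? ? ? [? ? ? ? ?] [? ? ? ? ?]; rewrite /= !addbA. Qed.

Lemma gfaddC x y : gfadd x y = gfadd y x.
Proof. by case: x y => ? ? ? ? ? [? ? ? ? ?]; congr GF32; apply: addbC. Qed.

Lemma gfaddxx x : gfadd x x = gf0.
Proof. by case: x => ? ? ? ? ?; rewrite /= !addbb. Qed.

Lemma gfadd0x x : gfadd gf0 x = x.
Proof. by case: x. Qed.

Lemma gfmulX_add x y : gfmulX (gfadd x y) = gfadd (gfmulX x) (gfmulX y).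
Proof. by case: x y => ? ? ? ? ? [? ? ? ? ?]; rewrite /= addbACA. Qed.

Lemma gfaddAC x y z : gfadd (gfadd x y) z = gfadd (gfadd x z) y.
Proof. by rewrite -gfaddA (gfaddC y) gfaddA. Qed.

Lemma gfaddACA w x y z : gfadd (gfadd w x) (gfadd y z) = gfadd (gfadd w y) (gfadd x z).
Proof. by rewrite -!gfaddA (gfaddA x) (gfaddC x) -gfaddA. Qed.

Lemma gf32_eq3 (f g : gf32 -> gf32 -> gf32 -> gf32) :
  all (fun x => all (fun y => all (fun z => f x y z == g x y z) gf32_enum) gf32_enum) gf32_enum ->
  forall x y z, f x y z = g x y z.
Proof. by move=> fg x y z; apply/eqP; move: x y z; apply: gf32_all3. Qed.

Lemma gfmulDl x y z : gfmul (gfadd x y) z = gfadd (gfmul x z) (gfmul y z).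
Proof. by move: x y z; apply: gf32_eq3; vm_compute. Qed.

Lemma gfmulDr x y z : gfmul x (gfadd y z) = gfadd (gfmul x y) (gfmul x z).
Proof. by move: x y z; apply: gf32_eq3; vm_compute. Qed.

Lemma gfmul0 x : gfmul gf0 x = gf0.
Proof. by case: x; do 5 case. Qed.

Lemma gfmulX31 x : iter 31 gfmulX x = x.
Proof. by apply/eqP; move: x; apply: gf32_all; vm_compute. Qed.

(** * Points of F^2 and their spans *)

Definition pt := (gf32 * gf32)%type.

Definition pt0 : pt := (gf0, gf0).
Definition pt_e0 : pt := (gf1, gf0).
Definition ptadd (c d : pt) : pt := (gfadd c.1 d.1, gfadd c.2 d.2).
Definition pt_bits (c : pt) : seq bool := gf32_bits c.1 ++ gf32_bits c.2.

Definition pt_eqb (c d : pt) : bool := gf32_eqb c.1 d.1 && gf32_eqb c.2 d.2.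

(* vm_compute evaluates both arguments of [||], so the generic [\in] always scans the whole
   list; hence this membership test and the [if] in maps_into. *)
Fixpoint pt_mem (c : pt) (s : seq pt) : bool :=
  if s is d :: s' then (if pt_eqb c d then true else pt_mem c s') else false.

Lemma pt_memE c s : pt_mem c s = (c \in s).
Proof.
by elim: s => [//|d s IH] /=; rewrite in_cons -IH (_ : pt_eqb c d = (c == d)).
Qed.

Definition pts : seq pt := [seq (x, y) | x <- gf32_enum, y <- gf32_enum].

Lemma mem_pts c : c \in pts.
Proof. by case: c => x y; apply: allpairs_f; apply: mem_gf32_enum. Qed.

Lemma ptaddA c d e : ptadd c (ptadd d e) = ptadd (ptadd c d) e.
Proof. by rewrite /ptadd /= !gfaddA. Qed.

Lemma ptaddC c d : ptadd c d = ptadd d c.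
Proof. by rewrite /ptadd gfaddC (gfaddC c.2). Qed.

Lemma ptaddxx c : ptadd c c = pt0.
Proof. by rewrite /ptadd !gfaddxx. Qed.

Lemma ptadd0x c : ptadd pt0 c = c.
Proof. by case: c => x y; rewrite /ptadd !gfadd0x. Qed.

Fixpoint subsums (T : Type) (add : T -> T -> T) (zero : T) (s : seq T) : seq T :=
  if s is x :: s' then let t := subsums add zero s' in t ++ map (add x) t else [:: zero].

Notation pspan := (subsums ptadd pt0).

Lemma pspan0 s : pt0 \in pspan s.
Proof. by elim: s => [|c s IH] /=; rewrite ?mem_head // mem_cat IH. Qed.

Lemma mem_pspan s c : c \in s -> c \in pspan s.
Proof.
elim: s => [//|d s IH]; rewrite in_cons => /predU1P[->|cs] /=; rewrite mem_cat.
  by apply/orP; right; apply/mapP; exists pt0; rewrite ?pspan0 // ptaddC ptadd0x.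
by rewrite IH.
Qed.

Lemma pspanD s c d : c \in pspan s -> d \in pspan s -> ptadd c d \in pspan s.
Proof.
elim: s c d => [|x s IH] c d /=.
  by rewrite !inE => /eqP-> /eqP->; rewrite ptaddxx.
rewrite !mem_cat => /orP[cs|/mapP[c' cs ->]] /orP[ds|/mapP[d' ds ->]].
- by rewrite IH.
- by apply/orP; right; apply/mapP; exists (ptadd c d'); rewrite ?IH // ptaddA (ptaddC c) ptaddA.
- by apply/orP; right; apply/mapP; exists (ptadd c' d); rewrite ?IH // ptaddA.
- apply/orP; left; rewrite -ptaddA (ptaddA c') (ptaddC c') -ptaddA ptaddA ptaddxx ptadd0x.
  exact: IH.
Qed.

Lemma pspan_sub l l' : {subset l <= pspan l'} -> {subset pspan l <= pspan l'}.
Proof.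
elim: l => [|c l IH] sub d /=; first by rewrite inE => /eqP->; apply: pspan0.
have {}IH := IH (fun e el => sub e (predU1r _ _ el)).
rewrite mem_cat => /orP[/IH //|/mapP[e el ->]].
by apply: pspanD; [apply/sub/mem_head | exact: IH].
Qed.

Definition pt_additive (g : pt -> pt) := forall c d, g (ptadd c d) = ptadd (g c) (g d).

Lemma pt_additive0 g : pt_additive g -> g pt0 = pt0.
Proof. by move=> gD; rewrite -(ptaddxx pt0) gD ptaddxx. Qed.

Lemma pspan_map g l c : pt_additive g -> c \in pspan l -> g c \in pspan (map g l).
Proof.
move=> gD; elim: l c => [|d l IH] c /=.
  by rewrite inE => /eqP->; rewrite pt_additive0 ?mem_head.
by rewrite !mem_cat => /orP[/IH->//|/mapP[e el ->]]; rewrite gD map_f ?IH ?orbT.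
Qed.

(** * The covering family *)

(* Mixed j k l hp hq is a^k times the span of (p, label hp), (q, label hq) and {0} * <b1, b2, b3>,
   where (p, q) is the j-th entry of plane_reps, (b1, b2, b3, r1, r2) the l-th entry of
   vertical_parts for j, and label runs over <r1, r2>.  The planes a^k <p, q>, k < 31, are the
   155 planes of F. *)
Inductive member :=
  | Graph of gf32 & gf32 & gf32
  | Mixed of nat & nat & nat & nat & nat
  | Vertical.

Definition member_code (i : member) :=
  match i with
  | Graph a b c => inl (inl (a, b, c))
  | Mixed j k l hp hq => inl (inr (j, k, l, hp, hq))
  | Vertical => inr tt
  end.
Definition code_member (t : (gf32 * gf32 * gf32 + nat * nat * nat * nat * nat) + unit) :=
  match t with
  | inl (inl (a, b, c)) => Graph a b c
  | inl (inr (j, k, l, hp, hq)) => Mixed j k l hp hq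
  | inr _ => Vertical
  end.
Lemma member_codeK : cancel member_code code_member. Proof. by case. Qed.
HB.instance Definition _ := Equality.copy member (can_type member_codeK).

Definition plane_reps : seq (gf32 * gf32) :=
  [seq (gf_of_nat pq.1, gf_of_nat pq.2) | pq <- [:: (3, 29); (8, 16); (5, 11); (6, 19); (3, 20)]].

Definition vertical_parts : seq (seq (gf32 * gf32 * gf32 * gf32 * gf32)) :=
  [seq [seq let: (b1, b2, b3, r1, r2) := t in
            (gf_of_nat b1, gf_of_nat b2, gf_of_nat b3, gf_of_nat r1, gf_of_nat r2) | t <- ts]
  | ts <- [::
  [:: (5, 10, 16, 1, 2); (6, 10, 18, 1, 2); (1, 10, 22, 2, 4); (2, 8, 17, 1, 4); (3, 4, 9, 1, 16)];
  [:: (2, 4, 16, 1, 8); (1, 8, 22, 2, 4); (5, 11, 19, 1, 2); (3, 12, 21, 1, 4); (7, 10, 17, 1, 2)];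
  [:: (1, 14, 18, 2, 4); (5, 8, 16, 1, 2); (7, 11, 17, 1, 2); (2, 4, 25, 1, 8); (3, 9, 20, 1, 4)];
  [:: (2, 8, 20, 1, 4); (6, 11, 18, 1, 2); (3, 12, 20, 1, 4); (7, 9, 19, 1, 2); (1, 4, 16, 2, 8)];
  [:: (6, 11, 18, 1, 2); (1, 8, 18, 2, 4); (4, 10, 18, 1, 2); (2, 5, 16, 1, 8); (3, 12, 17, 1, 4)]]].

Definition graph_map (a b c x : gf32) : gf32 :=
  let x2 := gfmul x x in gfadd (gfmul a x) (gfadd (gfmul b x2) (gfmul c (gfmul x2 x2))).

Definition mixed_frame (j k l : nat) : gf32 * gf32 * seq gf32 * gf32 * gf32 :=
  let scaled := gfmul (gfexp k) in
  let: (p, q) := nth (gf0, gf0) plane_reps j in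
  let: (b1, b2, b3, r1, r2) := nth (gf0, gf0, gf0, gf0, gf0) (nth [::] vertical_parts j) l in
  (scaled p, scaled q, [:: scaled b1; scaled b2; scaled b3], scaled r1, scaled r2).

Definition label (r1 r2 : gf32) (h : nat) : gf32 :=
  gfadd (if odd h then r1 else gf0) (if odd h./2 then r2 else gf0).

Definition gens (i : member) : seq pt :=
  match i with
  | Graph a b c => [seq (x, graph_map a b c x) | x <- gf32_basis]
  | Mixed j k l hp hq =>
      let: (p, q, V, r1, r2) := mixed_frame j k l in
      (p, label r1 r2 hp) :: (q, label r1 r2 hq) :: [seq (gf0, y) | y <- V]
  | Vertical => [seq (gf0, y) | y <- gf32_basis]
  end.

Definition block (i : member) : seq pt := pspan (gens i).

Definition valid (i : member) : bool :=
  if i is Mixed j k l hp hq then [&& j < 5, k < 31, l < 5, hp < 4 & hq < 4] else true.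

Definition graph_members : seq member :=
  [seq Graph a bc.1 bc.2 | a <- gf32_enum, bc <- [seq (b, c) | b <- gf32_enum, c <- gf32_enum]].

Definition mixed_members : seq member :=
  [seq Mixed j x.1 x.2.1 x.2.2.1 x.2.2.2 | j <- iota 0 5,
     x <- [seq (k, y) | k <- iota 0 31,
            y <- [seq (l, h) | l <- iota 0 5,
                    h <- [seq (hp, hq) | hp <- iota 0 4, hq <- iota 0 4]]]].

Definition members : seq member := graph_members ++ mixed_members ++ [:: Vertical].

Lemma size_members : size members = (32 ^ 3 + 5 * 31 * 5 * 4 * 4 + 1)%N.
Proof. by apply/eqP; vm_compute. Qed.

Lemma valid_members i : valid i -> i \in members.
Proof.
have mem_iota0 m n : m < n -> m \in iota 0 n by rewrite mem_iota.
rewrite /members mem_cat; case: i => [a b c|j k l hp hq|] Vi; apply/orP.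
- left; apply: (allpairs_f (fun a bc => Graph a bc.1 bc.2) (x := a) (y := (b, c)));
    first exact: mem_gf32_enum.
  by apply: allpairs_f; apply: mem_gf32_enum.
- right; rewrite mem_cat; apply/orP; left.
  case/and5P: Vi => /mem_iota0 lt_j /mem_iota0 lt_k /mem_iota0 lt_l /mem_iota0 lt_hp /mem_iota0 lt_hq.
  apply: (allpairs_f (fun j x => Mixed j x.1 x.2.1 x.2.2.1 x.2.2.2)
            (x := j) (y := (k, (l, (hp, hq))))) => //.
  by do 3 apply: allpairs_f => //.
- by right; rewrite mem_cat mem_seq1 eqxx orbT.
Qed.

(** * Symmetries of the family *)

Definition scale (c : pt) : pt := (gfmulX c.1, gfmulX c.2).
Definition shear (s : gf32) (c : pt) : pt := (c.1, gfadd c.2 (gfmul s c.1)).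

Lemma scale_additive : pt_additive scale.
Proof. by move=> c d; rewrite /scale /ptadd /= !gfmulX_add. Qed.

Lemma shear_additive s : pt_additive (shear s).
Proof. by move=> c d; rewrite /shear /ptadd /= gfmulDr gfaddACA. Qed.

Lemma iter_scale k c : iter k scale c = (iter k gfmulX c.1, iter k gfmulX c.2).
Proof. by elim: k => [|k IH] /=; [case: c | rewrite IH]. Qed.

Lemma iter_scale31 c : iter 31 scale c = c.
Proof. by rewrite iter_scale !gfmulX31; case: c. Qed.

Lemma shear0 : shear gf0 =1 id.
Proof. by case=> x y; rewrite /shear gfmul0 gfaddC gfadd0x. Qed.

Lemma shearD s t c : shear s (shear t c) = shear (gfadd s t) c.
Proof. by rewrite /shear /= gfmulDl -gfaddA (gfaddC (gfmul t _)). Qed.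

Lemma shearK s : cancel (shear s) (shear s).
Proof. by move=> c; rewrite shearD gfaddxx shear0. Qed.

(* a^30 = a^-1 and a^28 = a^-3, so a (A x + B x^2 + C x^4) = A u + a^30 B u^2 + a^28 C u^4
   for u = a x. *)
Definition scale_member (i : member) : member :=
  match i with
  | Graph a b c => Graph a (iter 30 gfmulX b) (iter 28 gfmulX c)
  | Mixed j k l hp hq => Mixed j (k.+1 %% 31) l hp hq
  | Vertical => Vertical
  end.

(* The label h of a plane point x becomes h + s x, which is replaced by the label congruent to it
   modulo the vertical part. *)
Definition shear_member (s : gf32) (i : member) : member :=
  match i with
  | Graph a b c => Graph (gfadd a s) b c
  | Mixed j k l hp hq =>
      let: (p, q, V, r1, r2) := mixed_frame j k l in
      let VV := subsums gfadd gf0 V in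
      let relabel h x :=
        let y := gfadd (label r1 r2 h) (gfmul s x) in
        find (fun h' => has (gf32_eqb (gfadd y (label r1 r2 h'))) VV) (iota 0 4) in
      Mixed j k l (relabel hp p) (relabel hq q)
  | Vertical => Vertical
  end.

(* The first test is only a shortcut: gens i' is contained in block i'. *)
Definition maps_into (g : pt -> pt) (i i' : member) : bool :=
  let G := gens i' in let B := pspan G in
  all (fun c => if pt_mem c G then true else pt_mem c B) (map g (gens i)).

Definition preserves (g : pt -> pt) : Prop :=
  forall i, i \in members -> exists2 i', i' \in members & {in block i, forall c, g c \in block i'}.

Lemma maps_intoP g i i' :
  pt_additive g -> maps_into g i i' -> {in block i, forall c, g c \in block i'}.
Proof.
move=> gD /allP gi c ci; apply: pspan_sub (pspan_map gD ci) => d /gi.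
by rewrite !pt_memE; case: ifP => [/mem_pspan|].
Qed.

Lemma preserves_by g (f : member -> member) : pt_additive g ->
  (forall i, i \in members -> valid (f i) && maps_into g i (f i)) -> preserves g.
Proof.
move=> gD fP i /fP/andP[/valid_members fi gi]; exists (f i) => //; exact: maps_intoP.
Qed.

Lemma eq_preserves g h : g =1 h -> preserves g -> preserves h.
Proof. by move=> gh Pg i /Pg[i' i'M gi]; exists i' => // c /gi; rewrite gh. Qed.

Lemma preserves_id : preserves id.
Proof. by move=> i iM; exists i. Qed.

Lemma preserves_comp g h : preserves g -> preserves h -> preserves (g \o h).
Proof.
move=> Pg Ph i /Ph[i1 /Pg[i2 i2M g12] h01]; exists i2 => // c /h01; exact: g12.
Qed.

Lemma preserves_iter n g : preserves g -> preserves (iter n g).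
Proof.
move=> Pg; elim: n => [|n IH]; first exact: preserves_id.
exact: preserves_comp Pg IH.
Qed.

Lemma scale_check :
  all (fun i => valid (scale_member i) && maps_into scale i (scale_member i)) members.
Proof. by vm_compute. Qed.

Lemma preserves_scale : preserves scale.
Proof. exact: preserves_by scale_additive (allP scale_check). Qed.

Lemma maps_into_shear_graph s a b c :
  maps_into (shear s) (Graph a b c) (Graph (gfadd a s) b c).
Proof.
rewrite /maps_into.
have -> : gens (Graph (gfadd a s) b c) = map (shear s) (gens (Graph a b c)).
  rewrite -map_comp; apply: eq_map => x.
  by rewrite /shear /graph_map /= gfmulDl gfaddAC.
by apply/allP => d dg; rewrite pt_memE dg.
Qed.

(* Graph members are handled by maps_into_shear_graph. *)
Lemma shear_check :
  all (fun s => all (fun i => if i is Graph _ _ _ then true else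
                        valid (shear_member s i) && maps_into (shear s) i (shear_member s i))
                    members) gf32_basis.
Proof. by vm_compute. Qed.

Lemma preserves_shear_basis s : s \in gf32_basis -> preserves (shear s).
Proof.
move=> sB; apply: (preserves_by (f := shear_member s)) (shear_additive s) _ => i.
by move/(allP (allP shear_check s sB)); case: i => // a b c _; apply: maps_into_shear_graph.
Qed.

Lemma gf32_subsums_basis s : s \in subsums gfadd gf0 gf32_basis.
Proof. by case: s; do 5 case; vm_compute. Qed.

Lemma preserves_shear_subsums l :
  {in l, forall t, preserves (shear t)} -> {in subsums gfadd gf0 l, forall t, preserves (shear t)}.
Proof.
elim: l => [|u l IH] Pl t /=.
  by rewrite inE => /eqP->; apply: eq_preserves preserves_id => c; rewrite shear0.
have {}IH := IH (fun v vl => Pl v (predU1r _ _ vl)).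
rewrite mem_cat => /orP[/IH //|/mapP[v /IH Pv ->]].
by apply: eq_preserves (preserves_comp (Pl u (mem_head u l)) Pv) => c; apply: shearD.
Qed.

Lemma preserves_shear s : preserves (shear s).
Proof. exact: preserves_shear_subsums preserves_shear_basis _ (gf32_subsums_basis s). Qed.

Lemma normalize_check :
  all (fun v => (v.1 == gf0) || has (fun s => pt_mem pt_e0 (traject scale (shear s v) 31)) gf32_enum)
      pts.
Proof. by vm_compute. Qed.

Lemma transitive_off_vertical v : v.1 != gf0 ->
  exists g h, [/\ preserves g, h v = pt_e0 & cancel h g].
Proof.
move=> v1; have /orP[/eqP v0|] := allP normalize_check v (mem_pts v).
  by rewrite v0 eqxx in v1.
case/hasP=> s _; rewrite pt_memE => /trajectP[k lt_k hv].
exists (shear s \o iter (31 - k) scale), (iter k scale \o shear s); split => //.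
  exact: preserves_comp (preserves_shear s) (preserves_iter _ preserves_scale).
by move=> c /=; rewrite -iterD subnK ?iter_scale31 ?shearK // ltnW.
Qed.

(** * Covering the 3-spaces *)

(* Binary tries representing sets of bit strings of one fixed length; on shorter keys the answer
   is irrelevant. *)
Inductive trie := Leaf of bool | Node of trie & trie.

Fixpoint trie_mem (t : trie) (bs : seq bool) : bool :=
  match t, bs with
  | Leaf b, _ => b
  | Node l r, b :: bs' => trie_mem (if b then r else l) bs'
  | Node _ _, [::] => true
  end.

Fixpoint trie_add (bs : seq bool) (t : trie) : trie :=
  match bs, t with
  | [::], _ => Leaf true
  | _, Leaf true => Leaf true
  | b :: bs', Leaf false =>
      if b then Node (Leaf false) (trie_add bs' (Leaf false))
      else Node (trie_add bs' (Leaf false)) (Leaf false)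
  | b :: bs', Node l r => if b then Node l (trie_add bs' r) else Node (trie_add bs' l) r
  end.

Fixpoint trie_union (t1 t2 : trie) : trie :=
  match t1, t2 with
  | Leaf true, _ | _, Leaf true => Leaf true
  | Leaf false, t | t, Leaf false => t
  | Node l1 r1, Node l2 r2 => Node (trie_union l1 l2) (trie_union r1 r2)
  end.

Fixpoint trie_full (t : trie) : bool :=
  match t with Leaf b => b | Node l r => trie_full l && trie_full r end.

Definition trie_of (s : seq pt) : trie := foldr (fun c => trie_add (pt_bits c)) (Leaf false) s.

Lemma trie_mem_union t1 t2 bs :
  trie_mem (trie_union t1 t2) bs = trie_mem t1 bs || trie_mem t2 bs.
Proof.
elim: t1 t2 bs => [[]|l1 IHl r1 IHr] [[]|l2 r2] [|b bs] //=; rewrite ?orbT ?orbF //.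
by case: b; [apply: IHr | apply: IHl].
Qed.

Lemma trie_mem_unions ts bs :
  trie_mem (foldr trie_union (Leaf false) ts) bs = has (trie_mem^~ bs) ts.
Proof. by elim: ts => [//|t ts IH] /=; rewrite trie_mem_union IH. Qed.

Lemma trie_full_mem t bs : trie_full t -> trie_mem t bs.
Proof.
elim: t bs => [b|l IHl r IHr] [|x bs] //=.
by case/andP=> fl fr; case: x; [apply: IHr | apply: IHl].
Qed.

Lemma trie_mem_add bs t bs' :
  size bs = size bs' -> trie_mem (trie_add bs t) bs' = (bs' == bs) || trie_mem t bs'.
Proof.
elim: bs t bs' => [|b bs IH] t [|b' bs'] //= [eq_size].
case: t => [[]|l r] /=; first by rewrite orbT.
  by case: b; case: b' => /=; rewrite ?IH ?orbF ?eqseq_cons //=; case: bs' {eq_size IH}.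
by case: b; case: b' => /=; rewrite ?IH ?eqseq_cons.
Qed.

Lemma size_pt_bits c : size (pt_bits c) = 10.
Proof. by case: c => [[? ? ? ? ?] [? ? ? ? ?]]. Qed.

Lemma pt_bits_inj : injective pt_bits.
Proof.
by move=> [[? ? ? ? ?] [? ? ? ? ?]] [[? ? ? ? ?] [? ? ? ? ?]] [-> -> -> -> -> -> -> -> -> ->].
Qed.

Lemma trie_of_mem s c : trie_mem (trie_of s) (pt_bits c) = (c \in s).
Proof.
elim: s => [//|d s IH] /=.
by rewrite trie_mem_add ?size_pt_bits // (inj_eq pt_bits_inj) IH in_cons.
Qed.

(* For each x, the members through (1, 0) and x cover every point. *)
Lemma e0_cover_check :
  let tries := [seq trie_of (block i) | i <- members & pt_mem pt_e0 (block i)] in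
  all (fun x => trie_full (foldr trie_union (Leaf false) [seq t <- tries | trie_mem t (pt_bits x)]))
      pts.
Proof. by vm_compute. Qed.

Lemma cover_e0 x y : exists2 i, i \in members &
  [/\ pt_e0 \in block i, x \in block i & y \in block i].
Proof.
move/allP: e0_cover_check => /(_ x (mem_pts x)) /(trie_full_mem (pt_bits y)).
rewrite trie_mem_unions filter_map has_map => /hasP[i].
rewrite !mem_filter pt_memE => /andP[/= xi /andP[e0i iM]] /= yi.
by exists i => //; split; rewrite // -trie_of_mem.
Qed.

Lemma vertical_block y : (gf0, y) \in block Vertical.
Proof. by case: y; do 5 case; vm_compute. Qed.

Lemma cover_three u v w : exists2 i, i \in members &
  [/\ u \in block i, v \in block i & w \in block i].
Proof.
wlog u1 : u v w / u.1 != gf0 => [gen|].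
  have [u0|/(gen u v w)//] := eqVneq u.1 gf0.
  have [v0|/(gen v u w)[i iM [? ? ?]]] := eqVneq v.1 gf0; first last.
    by exists i.
  have [w0|/(gen w u v)[i iM [? ? ?]]] := eqVneq w.1 gf0; first last.
    by exists i.
  exists Vertical; first exact: valid_members.
  by case: u v w u0 v0 w0 => [x1 y1] [x2 y2] [x3 y3] /= -> -> ->; split; apply: vertical_block.
have [g [h [Pg hu hK]]] := transitive_off_vertical u1.
have [i iM [e0i vi wi]] := cover_e0 (h v) (h w).
have [i' i'M gii'] := Pg i iM.
by exists i' => //; split; rewrite -[X in X \in _]hK gii' // hu.
Qed.

(** * From F^2 to F_2^10 *)

Lemma vspace_extend (K : fieldType) (vT : vectType K) (U : {vspace vT}) k :
  \dim U <= k <= \dim {:vT} -> exists V : {vspace vT}, (U <= V)%VS && (\dim V == k).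
Proof.
case/andP=> le_Uk le_kT; set X := take (k - \dim U) (vbasis U^C).
have freeX : free X.
  apply: (@catl_free _ _ (drop (k - \dim U) (vbasis U^C))).
  by rewrite cat_take_drop; apply: basis_free (vbasisP _).
have sub_XUc : (<<X>> <= U^C)%VS by apply/span_subvP => x /mem_take /vbasis_mem.
exists (U + <<X>>)%VS; rewrite addvSl dimv_disjoint_sum; last first.
  by apply/eqP; rewrite -subv0 -(capv_compl U) capvS.
rewrite (eqP freeX) size_take size_tuple dimv_compl.
by case: ltnP => ?; apply/eqP; lia.
Qed.

Lemma vspace_dim3 (K : fieldType) (vT : vectType K) (W : {vspace vT}) :
  \dim W = 3 -> exists w1 w2 w3, W = <<[:: w1; w2; w3]>>%VS.
Proof.
move=> dimW; rewrite -(span_basis (vbasisP W)).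
have : size (vbasis W) = 3 by rewrite size_tuple.
by case: (tval (vbasis W)) => [|w1 [|w2 [|w3 []]]] // _; exists w1, w2, w3.
Qed.

Local Open Scope ring_scope.

Definition vec_of_pt (c : pt) : 'rV['F_2]_10 := \row_(i < 10) (nth false (pt_bits c) i)%:R.

Definition pt_of_vec (v : 'rV['F_2]_10) : pt :=
  let b i := v 0 (inord i) != 0 in
  (GF32 (b 0) (b 1) (b 2) (b 3) (b 4), GF32 (b 5) (b 6) (b 7) (b 8) (b 9)).

Lemma F2_natr_neq0 (z : 'F_2) : (z != 0)%:R = z.
Proof. by case: z => [[|[|m]] lt_m2]; apply/val_inj. Qed.

Lemma F2_natr_addb (a b : bool) : (a (+) b)%:R = a%:R + b%:R :> 'F_2.
Proof. by case: a; case: b => //=; apply/val_inj. Qed.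

Lemma pt_of_vecK : cancel pt_of_vec vec_of_pt.
Proof.
move=> v; apply/rowP => i; rewrite mxE -[RHS]F2_natr_neq0; congr (_%:R).
case: i => [[|[|[|[|[|[|[|[|[|[|i]]]]]]]]]] lt_i] //=;
  by congr (v 0 _ != 0); apply/val_inj; rewrite /= inordK.
Qed.

Lemma vec_of_ptD c d : vec_of_pt (ptadd c d) = vec_of_pt c + vec_of_pt d.
Proof.
apply/rowP => i; rewrite !mxE -F2_natr_addb; congr (_%:R).
case: c d => [[? ? ? ? ?] [? ? ? ? ?]] [[? ? ? ? ?] [? ? ? ? ?]].
by case: i => [[|[|[|[|[|[|[|[|[|[|i]]]]]]]]]] lt_i].
Qed.

Lemma vec_of_pt0 : vec_of_pt pt0 = 0.
Proof. by apply/rowP => i; rewrite !mxE (_ : pt_bits pt0 = nseq 10 false) // nth_nseq if_same. Qed.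

Lemma vec_of_pt_span s c : c \in pspan s -> vec_of_pt c \in <<map vec_of_pt s>>%VS.
Proof.
elim: s c => [|d s IH] c /=; first by rewrite inE => /eqP->; rewrite vec_of_pt0 mem0v.
rewrite span_cons mem_cat => /orP[/IH|/mapP[e es ->]]; first exact: subvP (addvSr _ _) _.
by rewrite vec_of_ptD; apply: memv_add; [apply: memv_line | apply: IH].
Qed.

Lemma size_gens i : size (gens i) = 5.
Proof.
case: i => // j k l hp hq; rewrite /gens /mixed_frame.
case: (nth _ plane_reps j) => p q.
by case: (nth _ (nth [::] vertical_parts j) l) => [[[[b1 b2] b3] r1] r2].
Qed.

Lemma gens_space_bound i :
  (\dim <<map vec_of_pt (gens i)>> <= 5 <= \dim (fullv : {vspace 'rV['F_2]_10}))%N.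
Proof. by rewrite dimvf /dim /= mul1n (leq_trans (dim_span _)) // size_map size_gens. Qed.

Definition cover_space (i : member) : {vspace 'rV['F_2]_10} :=
  xchoose (vspace_extend (gens_space_bound i)).

Lemma cover_spaceP i :
  (<<map vec_of_pt (gens i)>> <= cover_space i)%VS /\ \dim (cover_space i) = 5.
Proof. by have /andP[sub /eqP dim5] := xchooseP (vspace_extend (gens_space_bound i)). Qed.

Theorem mainTheorem15 : covering_number_le 'F_2 10 5 3 45230.
Proof.
exists (map cover_space members); split; last by rewrite size_map size_members.
split=> [_ /mapP[i _ ->]|W /vspace_dim3[w1 [w2 [w3 ->]]]]; first by case: (cover_spaceP i).
have [i iM [in1 in2 in3]] := cover_three (pt_of_vec w1) (pt_of_vec w2) (pt_of_vec w3).
exists (cover_space i); first exact: map_f.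
apply: subv_trans (cover_spaceP i).1; apply/span_subvP => w.
by rewrite !inE => /or3P[] /eqP->; rewrite -[X in X \in _]pt_of_vecK vec_of_pt_span.
Qed.
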